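(* Let $X$ be a countably infinite set. The lattice $\mathrm{Cl}_{loc}(X)$ of local clones on $X$ does not embed (as a lattice) into the clone lattice $\mathrm{Cl}(A)$ over any finite set $A$.
   Context: For a set $Y$, a clone on $Y$ is a set of finitary operations on $Y$ containing all projections and closed under composition; $\mathrm{Cl}(Y)$ is the lattice of all clones on $Y$ ordered by inclusion. Giving $X$ the discrete topology and $X^{X^n}$ the product topology, a clone on $X$ is local if for each $n\ge1$ its set of $n$-ary operations is closed in $X^{X^n}$; equivalently, an $n$-ary operation $g$ belongs to the clone whenever for every finite $B\subseteq X^n$ some $n$-ary operation of the clone agrees with $g$ on $B$. $\mathrm{Cl}_{loc}(X)$ is the complete lattice of local clones on $X$ ordered by inclusion. A lattice embedding is an injective map preserving binary meets and joins. *)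

From mathcomp Require Import all_boot.
From Stdlib Require List.
Set Implicit Arguments. Unset Strict Implicit. Unset Printing Implicit Defensive.

Definition op (Y : Type) := {n : nat & ('I_n -> Y) -> Y}.

Definition opset (Y : Type) := op Y -> Prop.

Definition proj (Y : Type) (n : nat) (i : 'I_n) : op Y :=
  existT _ n (fun x => x i).

Definition is_clone (Y : Type) (C : opset Y) : Prop :=
  [/\ (forall o, C o -> 0 < projT1 o),
      (forall n (i : 'I_n), C (proj Y i)) &
      (forall n m (f : ('I_n -> Y) -> Y) (g : 'I_n -> ('I_m -> Y) -> Y),
          C (existT _ n f) -> (forall i, C (existT _ m (g i))) ->
          C (existT _ m (fun x => f (fun i => g i x))))].

(* Local clones: each n-ary part is closed in the product topology of
   X^(X^n), X discrete; i.e. an n-ary g belongs to C as soon as for every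
   finite B ⊆ X^n (given as a list) some n-ary member of C agrees with g on B. *)
Definition is_local_clone (X : Type) (C : opset X) : Prop :=
  is_clone C /\
  forall n (g : ('I_n -> X) -> X), 0 < n ->
    (forall B : seq ('I_n -> X),
        exists h, C (existT _ n h) /\ (forall x, List.In x B -> h x = g x)) ->
    C (existT _ n g).

Definition opset_meet (Y : Type) (C D : opset Y) : opset Y :=
  fun o => C o /\ D o.

Definition clone_join (Y : Type) (C D : opset Y) : opset Y :=
  fun o => forall E, is_clone E -> (forall p, C p -> E p) ->
                     (forall p, D p -> E p) -> E o.

Definition local_clone_join (Y : Type) (C D : opset Y) : opset Y :=
  fun o => forall E, is_local_clone E -> (forall p, C p -> E p) ->
                     (forall p, D p -> E p) -> E o.

Definition loc_lattice_embedding (X A : Type) (F : opset X -> opset A) : Prop :=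
  [/\ (forall C, is_local_clone C -> is_clone (F C)),
      (forall C D, is_local_clone C -> is_local_clone D -> F C = F D -> C = D),
      (forall C D, is_local_clone C -> is_local_clone D ->
          F (opset_meet C D) = opset_meet (F C) (F D)) &
      (forall C D, is_local_clone C -> is_local_clone D ->
          F (local_clone_join C D) = clone_join (F C) (F D))].

From mathcomp Require Import all_boot.
From Stdlib Require Import FunctionalExtensionality PropExtensionality.
From Stdlib Require Import Classical ClassicalEpsilon.
From Stdlib Require List.

Set Implicit Arguments. Unset Strict Implicit. Unset Printing Implicit Defensive.

(* A lattice embedding [F] preserves and reflects inclusion.  On X we build
   local clones C0, C1 with C0 not below C1, and a family (C_a) indexed by the
   continuum such that C0 <= C1 \/ C_a for every a while C_a /\ C_b <= C1 for
   a <> b.  Pick f in F C0 but not in F C1.  For each a, f lies in the clone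
   generated by F C1 and F C_a, hence in the clone generated by F C1 and a
   finite set G_a of operations of F C_a.  Over a finite set A there are only
   countably many such finite sets, so G_a = G_b for some a <> b; then
   G_a <= F C_a /\ F C_b = F (C_a /\ C_b) <= F C1, and f would lie in F C1. *)

Definition opset_sub (Y : Type) (C D : opset Y) : Prop := forall o, C o -> D o.

Lemma opset_ext (Y : Type) (C D : opset Y) : (forall o, C o <-> D o) -> C = D.
Proof.
move=> CD; apply: functional_extensionality => o.
exact: propositional_extensionality.
Qed.

Lemma opset_meet_idl (Y : Type) (C D : opset Y) :
  opset_sub C D <-> opset_meet C D = C.
Proof.
split => [CD|<- o [] //]; apply: opset_ext => o.
by split => [[]|Co] //; split => //; exact: CD.
Qed.

Section LocalClones.
Variable Y : Type.

Definition all_ops : opset Y := fun o => 0 < projT1 o.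

Lemma all_ops_local : is_local_clone all_ops.
Proof.
split=> //; split=> //.
- by move=> n [i lt_in]; exact: leq_ltn_trans lt_in.
- by move=> n m f g n_pos g_pos; exact: (g_pos (Ordinal n_pos)).
Qed.

Definition local_clone_cap (Q : opset Y -> Prop) : opset Y :=
  fun o => forall E, is_local_clone E -> Q E -> E o.

Lemma local_clone_cap_local (Q : opset Y -> Prop) :
  Q all_ops -> is_local_clone (local_clone_cap Q).
Proof.
move=> Qall; split; first split.
- by move=> o capo; exact: (capo _ all_ops_local Qall).
- by move=> n i E [[_ E_proj _] _] _; exact: E_proj.
- move=> n m f g Cf Cg E LE QE; case: (LE) => [[_ _ E_comp] _].
  by apply: E_comp => [|i]; [exact: Cf|exact: Cg].
- move=> n g n_pos g_approx E LE QE; case: (LE) => [_ E_loc].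
  apply: E_loc => // B; have [h [Ch hg]] := g_approx B.
  by exists h; split; [exact: Ch|].
Qed.

Lemma local_clone_join_local (C D : opset Y) :
  is_clone C -> is_clone D -> is_local_clone (local_clone_join C D).
Proof.
move=> [C_pos _ _] [D_pos _ _].
have -> : local_clone_join C D =
    local_clone_cap (fun E => opset_sub C E /\ opset_sub D E).
  by apply: opset_ext => o; split => [Jo E LE [CE DE]|capo E LE CE DE];
    [exact: Jo|exact: capo].
by apply: local_clone_cap_local; split; [exact: C_pos|exact: D_pos].
Qed.

Lemma opset_meet_local (C D : opset Y) :
  is_local_clone C -> is_local_clone D -> is_local_clone (opset_meet C D).
Proof.
move=> [[C_pos C_proj C_comp] C_loc] [[_ D_proj D_comp] D_loc].
split; first split.
- by move=> o [Co _]; exact: C_pos.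
- by move=> n i; split.
- move=> n m f g [Cf Df] CDg.
  by split; [apply: C_comp|apply: D_comp] => // i; case: (CDg i).
- move=> n g n_pos g_approx; split; [apply: C_loc|apply: D_loc] => // B;
    have [h [[Ch Dh] hg]] := g_approx B; by exists h.
Qed.

Definition preserves (R : Y -> Y -> Prop) (o : op Y) : Prop :=
  forall x y : 'I_(projT1 o) -> Y, (forall i, R (x i) (y i)) ->
    R (projT2 o x) (projT2 o y).

Definition Pol (J : Type) (Rs : J -> Y -> Y -> Prop) : opset Y :=
  fun o => 0 < projT1 o /\ forall j, preserves (Rs j) o.

Lemma Pol_local (J : Type) (Rs : J -> Y -> Y -> Prop) : is_local_clone (Pol Rs).
Proof.
split; first split.
- by move=> o [].
- by move=> n [i lt_in]; split; [exact: leq_ltn_trans lt_in|move=> j x y; apply].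
- move=> n m f g [n_pos f_pres] Pg; split; first by case: (Pg (Ordinal n_pos)).
  move=> j x y Rxy; apply: (f_pres j (fun i => g i x) (fun i => g i y)) => i.
  by case: (Pg i) => _ g_pres; exact: g_pres.
- move=> n g n_pos g_approx; split => // j x y Rxy /=.
  have [h [[_ h_pres] hg]] := g_approx [:: x; y].
  rewrite -(hg x) /=; last by left.
  rewrite -(hg y) /=; last by right; left.
  exact: h_pres.
Qed.

Inductive clone_gen (P : opset Y) : opset Y :=
| clone_gen_base o : P o -> clone_gen P o
| clone_gen_proj n (i : 'I_n) : clone_gen P (proj Y i)
| clone_gen_comp n m (f : ('I_n -> Y) -> Y) (g : 'I_n -> ('I_m -> Y) -> Y) :
    clone_gen P (existT _ n f) -> (forall i, clone_gen P (existT _ m (g i))) ->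
    clone_gen P (existT _ m (fun x => f (fun i => g i x))).

Lemma clone_gen_clone (P : opset Y) :
  (forall o, P o -> 0 < projT1 o) -> is_clone (clone_gen P).
Proof.
move=> P_pos; split.
- move=> o; elim => [p /P_pos //|n [i lt_in]|n m f g _ n_pos _ g_pos] /=.
  + exact: leq_ltn_trans lt_in.
  + exact: (g_pos (Ordinal n_pos)).
- exact: clone_gen_proj.
- exact: clone_gen_comp.
Qed.

Lemma clone_gen_min (P E : opset Y) :
  is_clone E -> opset_sub P E -> opset_sub (clone_gen P) E.
Proof.
move=> [_ E_proj E_comp] PE o; elim => [p /PE //|n i|n m f g _ Ef _ Eg].
- exact: E_proj.
- exact: E_comp.
Qed.

Lemma clone_gen_mono (P Q : opset Y) :
  opset_sub P Q -> opset_sub (clone_gen P) (clone_gen Q).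
Proof.
move=> PQ o; elim => [p /PQ|n i|n m f g _ Qf _ Qg].
- exact: clone_gen_base.
- exact: clone_gen_proj.
- exact: clone_gen_comp.
Qed.

Lemma clone_join_sub_gen (C D : opset Y) :
  is_clone C -> is_clone D ->
  opset_sub (clone_join C D) (clone_gen (fun p => C p \/ D p)).
Proof.
move=> [C_pos _ _] [D_pos _ _] o; apply.
- by apply: clone_gen_clone => p [/C_pos|/D_pos].
- by move=> p Cp; apply: clone_gen_base; left.
- by move=> p Dp; apply: clone_gen_base; right.
Qed.

Lemma In_enum (T : finType) (x : T) : List.In x (enum T).
Proof.
elim: (enum T) (mem_enum T x) => //= y s IHs.
by rewrite in_cons => /orP [/eqP ->|/IHs]; [left|right].
Qed.

Lemma clone_gen_finite (C D : opset Y) o :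
  clone_gen (fun p => C p \/ D p) o ->
  exists G : seq (op Y), (forall q, List.In q G -> D q) /\
    clone_gen (fun p => C p \/ List.In p G) o.
Proof.
elim => [p [Cp|Dp]|n i|n m f g _ [Gf [DGf gen_f]] _ IHg].
- by exists [::]; split => //; apply: clone_gen_base; left.
- by exists [:: p]; split => [q [<-|]|] //; apply: clone_gen_base; right; left.
- by exists [::]; split => //; apply: clone_gen_proj.
- have [Gg HGg] := choice _ IHg.
  pose G := Gf ++ List.concat [seq Gg i | i <- enum 'I_n].
  have Gg_sub i q : List.In q (Gg i) -> List.In q G.
    move=> Gq; apply/List.in_app_iff; right; apply/List.in_concat.
    by exists (Gg i); split => //; apply/List.in_map_iff; exists i; split => //;
      exact: In_enum.
  exists G; split.
  + move=> q /List.in_app_iff [/DGf //|/List.in_concat [l [Gl lq]]].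
    have [i [Gil _]] := iffLR (List.in_map_iff _ _ _) Gl; subst l.
    by case: (HGg i) => DGg _; exact: DGg.
  + apply: clone_gen_comp => [|i].
    * apply: clone_gen_mono gen_f => p [Cp|Gp]; [left|right] => //.
      by apply/List.in_app_iff; left.
    * case: (HGg i) => _ gen_g.
      apply: clone_gen_mono gen_g => p [Cp|Gp]; [left|right] => //.
      exact: Gg_sub Gp.
Qed.

End LocalClones.

Lemma cantor_injection (c : (nat -> bool) -> nat) : ~ injective c.
Proof.
move=> c_inj.
pose P k := exists a : nat -> bool, c a = k /\ a k.
pose diag k := if excluded_middle_informative (P k) then false else true.
have diagP k : diag k <-> ~ P k.
  by rewrite /diag; case: excluded_middle_informative.
have : diag (c diag) <-> P (c diag).
  by split => [|[a [/c_inj -> //]]]; exists diag.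
by rewrite diagP; tauto.
Qed.

Definition enc_op (A : finType) (o : op A) : nat :=
  let: existT n f := o in pickle (n, pickle [ffun x : {ffun 'I_n -> A} => f x]).

Lemma enc_op_inj (A : finType) : injective (@enc_op A).
Proof.
move=> [n f] [m g] /= /(pcan_inj pickleK) [nm]; subst m.
move=> /(pcan_inj pickleK) fg.
congr existT; apply: functional_extensionality => x.
have ffx : (fun i => [ffun i => x i] i) = x.
  by apply: functional_extensionality => i; rewrite ffunE.
move/ffunP/(_ [ffun i => x i]): fg; rewrite !ffunE => fgx.
by rewrite -[in RHS]ffx -[in LHS]ffx.
Qed.

Section Embedding.
Variables (X : Type) (A : finType) (F : opset X -> opset A).
Hypothesis HF : loc_lattice_embedding F.

Lemma emb_mono (C D : opset X) : is_local_clone C -> is_local_clone D ->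
  opset_sub C D -> opset_sub (F C) (F D).
Proof.
case: HF => _ _ F_meet _ LC LD /opset_meet_idl CD.
by apply/opset_meet_idl; rewrite -F_meet // CD.
Qed.

Lemma emb_reflect (C D : opset X) : is_local_clone C -> is_local_clone D ->
  opset_sub (F C) (F D) -> opset_sub C D.
Proof.
case: HF => _ F_inj F_meet _ LC LD /opset_meet_idl FCD.
by apply/opset_meet_idl; apply: F_inj; rewrite ?F_meet //; exact: opset_meet_local.
Qed.

Lemma emb_no_continuum_family (C0 C1 : opset X) (Cs : (nat -> bool) -> opset X) :
  is_local_clone C0 -> is_local_clone C1 -> (forall a, is_local_clone (Cs a)) ->
  ~ opset_sub C0 C1 ->
  (forall a, opset_sub C0 (local_clone_join C1 (Cs a))) ->
  (forall a b, a <> b -> opset_sub (opset_meet (Cs a) (Cs b)) C1) ->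
  False.
Proof.
move=> L0 L1 Ls nsub01 sub0 sub_meet.
case: (HF) => F_clone _ F_meet F_join.
have [f [F0f nF1f]] : exists f, F C0 f /\ ~ F C1 f.
  apply: NNPP => nf; apply/nsub01/(emb_reflect L0 L1) => f F0f.
  by apply: NNPP => nF1f; apply: nf; exists f.
have support a : exists G : seq (op A), (forall q, List.In q G -> F (Cs a) q) /\
    clone_gen (fun p => F C1 p \/ List.In p G) f.
  apply/clone_gen_finite/clone_join_sub_gen; [exact: F_clone|exact: F_clone|].
  rewrite -F_join //; apply: (emb_mono L0 _ (sub0 a)) F0f.
  by apply: local_clone_join_local; [case: L1|case: (Ls a)].
have [G HG] := choice _ support.
have [a [b [Nab Gab]]] : exists a b, a <> b /\ G a = G b.
  apply: NNPP => nab.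
  apply: (@cantor_injection (fun a => pickle (map (@enc_op A) (G a)))).
  move=> a b /(pcan_inj pickleK) /(inj_map (@enc_op_inj A)) Gab.
  by apply: NNPP => Nab; apply: nab; exists a, b.
apply: nF1f; case: (HG a) => Ga gen_f.
apply: (clone_gen_min (F_clone _ L1)) gen_f => p [//|Gp].
apply: (emb_mono _ L1 (sub_meet a b Nab)); first exact: opset_meet_local.
rewrite F_meet //; split; first exact: Ga.
by case: (HG b) => Gb _; apply: Gb; rewrite -Gab.
Qed.

End Embedding.

Lemma mkseq_separates (a b : nat -> bool) :
  a <> b -> exists j, mkseq a j.+1 <> mkseq b j.+1.
Proof.
move=> Nab; apply: NNPP => sep; apply: Nab; apply: functional_extensionality => j.
apply: NNPP => Nj; apply: sep; exists j => ab; apply: Nj.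
by rewrite -(nth_mkseq false a (ltnSn j)) ab nth_mkseq.
Qed.

Section Witness.
Variables (X : Type) (e : X -> nat) (d : nat -> X).
Hypothesis de : cancel d e.

Definition unop (h : X -> X) : op X := existT _ 1 (fun x => h (x ord0)).
Definition const1 : op X := unop (fun=> d 1).

Definition C0 : opset X := local_clone_cap (fun E => E const1).

Definition fix0_rel (_ : unit) (x y : X) : Prop := e x = 0 /\ e y = 0.
Definition C1 : opset X := Pol fix0_rel.

(* Even codes >= 2 name the levels m, odd codes >= 3 name finite bit strings. *)
Definition Ycode (m : nat) : nat := m.*2.+2.
Definition Zcode (s : seq bool) : nat := (pickle s).*2.+3.

Lemma Zcode_inj : injective Zcode.
Proof. by move=> s t [/double_inj /(pcan_inj pickleK)]. Qed.

Definition branch_rel (a : nat -> bool) (m : nat) (x y : X) : Prop :=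
  (e x = 0 /\ e y = Ycode m) \/ (e x = 1 /\ e y = Zcode (mkseq a m.+1)).
Definition Cbranch (a : nat -> bool) : opset X := Pol (branch_rel a).

Definition retract0 (y : X) : X := if e y == 0 then y else d 1.

(* [advance a] sends every pair of [branch_rel a m] to the pair
   (1, Zcode (mkseq a m.+1)) and never takes a value coded by 0, so
   [retract0] after [advance a] is the constant [d 1]. *)
Definition advance (a : nat -> bool) (y : X) : X :=
  if e y <= 1 then d 1 else if odd (e y) then y
  else d (Zcode (mkseq a (e y).-2./2.+1)).

Lemma C0_local : is_local_clone C0.
Proof. exact: local_clone_cap_local. Qed.

Lemma const1_notin_C1 : ~ C1 const1.
Proof.
move=> [_ /(_ tt (fun=> d 0) (fun=> d 0))]; rewrite /fix0_rel /= de.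
by case=> // _; rewrite de.
Qed.

Lemma retract0_in_C1 : C1 (unop retract0).
Proof.
split=> // u x y /(_ ord0) [ex ey].
by rewrite /= /retract0 ex ey.
Qed.

Lemma advance_in_Cbranch a : Cbranch a (unop (advance a)).
Proof.
split=> // m x y /(_ ord0) /= [[ex ey]|[ex ey]]; right; rewrite /advance ex ey.
- by rewrite /Ycode /= odd_double /= doubleK !de.
- by rewrite /Zcode /= odd_double /=; split; [exact: de|exact: ey].
Qed.

Lemma retract0_advance a y : retract0 (advance a y) = d 1.
Proof.
rewrite /retract0 /advance; case: leqP => [_|y_gt1]; first by rewrite de.
case: (odd (e y)) => /=; last by rewrite de.
by case: eqP => // y0; move: y_gt1; rewrite y0.
Qed.

Lemma C0_sub_join a : opset_sub C0 (local_clone_join C1 (Cbranch a)).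
Proof.
move=> o C0o; apply: (C0o (local_clone_join C1 (Cbranch a))).
  by apply: local_clone_join_local;
    [case: (Pol_local fix0_rel)|case: (Pol_local (branch_rel a))].
move=> E [[_ _ E_comp] _] C1E CbE.
have := E_comp 1 1 _ (fun _ x => advance a (x ord0))
  (C1E _ retract0_in_C1) (fun _ => CbE _ (advance_in_Cbranch a)).
have -> // : (fun x : 'I_1 -> X => retract0 (advance a (x ord0))) = fun=> d 1.
by apply: functional_extensionality => x; rewrite retract0_advance.
Qed.

(* At a level j where the prefixes of a and b differ, the Z-ends of the two
   relations are distinct, so a common polymorphism must send 0...0 to 0. *)
Lemma Cbranch_meet_sub a b :
  a <> b -> opset_sub (opset_meet (Cbranch a) (Cbranch b)) C1.
Proof.
move=> Nab [n f] [[n_pos a_pres] [_ b_pres]]; split=> // u.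
have [j Nj] := mkseq_separates Nab.
have f0 x : (forall i, e (x i) = 0) -> e (f x) = 0.
  move=> x0; pose y := fun _ : 'I_n => d (Ycode j).
  have xy c i : branch_rel c j (x i) (y i) by left; split; [exact: x0|exact: de].
  case: (a_pres j x y (xy a)) => [[-> //]|[_ Za]].
  case: (b_pres j x y (xy b)) => [[-> //]|[_ Zb]].
  by case: Nj; apply: Zcode_inj; rewrite -Za -Zb.
by move=> x y xy; split; apply: f0 => i; case: (xy i).
Qed.

End Witness.

Theorem corollary2p5 (X : Type) (e : X -> nat) (he : bijective e)
    (A : finType) :
  ~ exists F : opset X -> opset A, loc_lattice_embedding F.
Proof.
case: he => d _ de [F HF].
apply: (emb_no_continuum_family HF (C0_local d) (Pol_local (fix0_rel e))
  (fun a => Pol_local (branch_rel e a))).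
- by move=> sub01; apply: (const1_notin_C1 de); apply: sub01.
- exact: C0_sub_join.
- exact: Cbranch_meet_sub.
Qed.
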